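(* Consider a list of $l$ items with initial order $[a_1,a_2,\dots,a_l]$ and, for $s\ge1$, the request sequence $$\sigma_\gamma=\bigl\langle (a_l^3,a_{l-1}^3,\dots,a_1^3)^{2s}\bigr\rangle.$$ Under the full cost model, $\mathrm{MTFO}(\sigma_\gamma)=\mathrm{MTFE}(\sigma_\gamma)=s\,(3l^2+o(l^2))$, $\mathrm{TS}(\sigma_\gamma)=s\,(4l^2+o(l^2))$ and $\mathrm{OPT}(\sigma_\gamma)=s\,(2l^2+o(l^2))$, where the $o(l^2)$ terms depend only on $l$ and are $o(l^2)$ as $l\to\infty$.
   Context: Static list update: serving a request to the item at position $i$ (from the front) costs $i$ (full cost model); the accessed item may be moved closer to the front for free (free exchange); two adjacent items may be swapped at cost $1$ (paid exchange). $\mathrm{OPT}(\sigma)$ is the minimum cost of any offline algorithm from the same initial list. Notation: $a^3$ denotes three consecutive requests to $a$, and $(w)^{k}$ denotes $k$ concatenated copies of $w$. MTFO moves a requested item to the front on the 1st, 3rd, 5th, ... request to that item; MTFE on the 2nd, 4th, 6th, ... request; otherwise they leave it in place. TS (Timestamp): on a request to item $x$, if $x$ has been requested before and some item preceding $x$ has been requested at most once since the previous request to $x$, then $x$ is moved to immediately in front of the frontmost such item; otherwise nothing moves. *)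

From Stdlib Require Import Arith List Reals Classical ClassicalEpsilon Wf_nat.
Import ListNotations.

(** * List update model (full cost model).
    Items are natural numbers; the item a_i is represented by the number i.
    A list state is a [list nat] (front of the list = head). *)

Fixpoint pos (x : nat) (L : list nat) : nat :=
  match L with
  | [] => 0
  | y :: L' => if Nat.eqb x y then 0 else S (pos x L')
  end.

Definition access_cost (x : nat) (L : list nat) : nat := S (pos x L).

Definition del (x : nat) (L : list nat) : list nat :=
  filter (fun y => negb (Nat.eqb x y)) L.

Definition move_to_front (x : nat) (L : list nat) : list nat := x :: del x L.

Fixpoint insert_before (x y : nat) (L : list nat) : list nat :=
  match L with
  | [] => []
  | z :: L' => if Nat.eqb z y then x :: z :: L' else z :: insert_before x y L'
  end.

Fixpoint insert_at (k x : nat) (L : list nat) : list nat :=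
  match k, L with
  | 0, _ => x :: L
  | S k', z :: L' => z :: insert_at k' x L'
  | S _, [] => [x]
  end.

Definition occ (x : nat) (h : list nat) : nat := count_occ Nat.eq_dec h x.

(** An online rule receives the history of previous requests (oldest first),
    the current list and the current request, and returns the new list
    (the move is performed after paying the access cost). *)
Definition online_rule := list nat -> list nat -> nat -> list nat.

Fixpoint run_online (A : online_rule) (hist L σ : list nat) : nat :=
  match σ with
  | [] => 0
  | x :: σ' => access_cost x L + run_online A (hist ++ [x]) (A hist L x) σ'
  end.

Definition online_cost (A : online_rule) (L σ : list nat) : nat :=
  run_online A [] L σ.

Definition MTFO_rule : online_rule := fun hist L x =>
  if Nat.odd (S (occ x hist)) then move_to_front x L else L.

Definition MTFE_rule : online_rule := fun hist L x =>
  if Nat.even (S (occ x hist)) then move_to_front x L else L.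

Fixpoint take_until (x : nat) (l : list nat) : list nat :=
  match l with
  | [] => []
  | y :: l' => if Nat.eqb y x then [] else y :: take_until x l'
  end.

(** TS (Timestamp): if [x] was requested before, let [since] be the requests
    made strictly after the previous request to [x]; among the items preceding
    [x] in the list, those requested at most once in [since] are candidates;
    if there is one, [x] is moved immediately in front of the frontmost one. *)
Definition TS_rule : online_rule := fun hist L x =>
  if existsb (Nat.eqb x) hist then
    let since := take_until x (rev hist) in
    let cands := filter (fun y => Nat.leb (occ y since) 1) (firstn (pos x L) L) in
    match cands with
    | [] => L
    | y :: _ => insert_before x y (del x L)
    end
  else L.

Definition MTFO_cost (L σ : list nat) : nat := online_cost MTFO_rule L σ.
Definition MTFE_cost (L σ : list nat) : nat := online_cost MTFE_rule L σ.
Definition TS_cost (L σ : list nat) : nat := online_cost TS_rule L σ.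

(** Before serving the t-th request the algorithm performs a list of paid
    exchanges (a number j swaps the items at positions j and j+1, cost 1 each);
    then it pays the access cost; then it may move the accessed item, for free,
    to any position k closer to the front (if k is not smaller than its current
    position, nothing moves). A schedule gives these actions for each time t. *)
Fixpoint swap_adj (j : nat) (L : list nat) : list nat :=
  match j, L with
  | 0, a :: b :: L' => b :: a :: L'
  | S j', a :: L' => a :: swap_adj j' L'
  | _, _ => L
  end.

Definition free_move (x k : nat) (L : list nat) : list nat :=
  if Nat.ltb k (pos x L) then insert_at k x (del x L) else L.

Definition schedule := nat -> (list nat * nat).

Fixpoint run_offline (sch : schedule) (t : nat) (L σ : list nat) : nat :=
  match σ with
  | [] => 0
  | x :: σ' =>
      let (paid, k) := sch t in
      let L1 := fold_left (fun L j => swap_adj j L) paid L in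
      length paid + access_cost x L1 + run_offline sch (S t) (free_move x k L1) σ'
  end.

Definition offline_cost (sch : schedule) (L σ : list nat) : nat :=
  run_offline sch 0 L σ.

Definition is_opt (L σ : list nat) (c : nat) : Prop :=
  (exists sch, offline_cost sch L σ = c) /\ (forall sch, c <= offline_cost sch L σ).

Lemma opt_exists (L σ : list nat) : { c : nat | is_opt L σ c }.
Proof.
  apply constructive_indefinite_description.
  destruct (dec_inh_nat_subset_has_unique_least_element
              (fun c => exists sch, offline_cost sch L σ = c)) as [c [[H1 H2] _]].
  - intro n; apply classic.
  - exists (offline_cost (fun _ => ([], 0)) L σ); eauto.
  - exists c; split; [exact H1|].
    intro sch; apply H2; eauto.
Qed.

Definition OPT (L σ : list nat) : nat := proj1_sig (opt_exists L σ).

Definition init_list (l : nat) : list nat := seq 1 l.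

Definition round (l : nat) : list nat := flat_map (fun a => [a; a; a]) (rev (seq 1 l)).

Definition sigma_gamma (l s : nat) : list nat := concat (repeat (round l) (2 * s)).

Definition little_o_sq (g : nat -> R) : Prop :=
  forall eps : R, (eps > 0)%R ->
    exists N : nat, forall l : nat, (N <= l)%nat -> (Rabs (g l) <= eps * INR l ^ 2)%R.

(** All costs are computed exactly; the o(l^2) terms are then linear in l.
    - Shape invariant: just before the triple a_x^3 every algorithm considered has the
      list [phase_list l x] = [a_{x+1}..a_l, a_1..a_x], so a_x is last and, once it
      reaches the front, the list is [phase_list l (x-1)].  A generic accounting
      lemma ([rounds_cost]) turns a per-triple cost, depending only on the round,
      into the cost of 2s rounds.
    - MTFO / MTFE move a_x on its first request of the triple in every other round,
      on its second request otherwise: triples cost l+2 and 2l+1 alternately, in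
      total s l (3l+3).  TS never moves on the first request and always on the
      second: every triple costs 2l+1, in total s l (4l+2).
    - OPT: move-to-front pays l+2 per triple.  Conversely, with the potential
      "inversions with respect to the order of [phase_list l x]", every offline
      algorithm pays at least l+2 per triple in amortized terms; the potential
      vanishes on the initial list, so OPT = s l (2l+4).
    - Finally s l (a l + b) = s (a l^2 + b l) and b l = o(l^2). *)

From Stdlib Require Import Arith List Lia Permutation Bool.
Import ListNotations.

Lemma filter_all_true (f : nat -> bool) M : (forall z, In z M -> f z = true) -> filter f M = M.
Proof. induction M; simpl; intros H; auto. rewrite H by auto; f_equal; apply IHM; auto. Qed.

Lemma filter_all_false (f : nat -> bool) M : (forall z, In z M -> f z = false) -> filter f M = [].
Proof. induction M; simpl; intros H; auto. rewrite H by auto; apply IHM; auto. Qed.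

Lemma del_notin x M : ~ In x M -> del x M = M.
Proof.
  intros H; apply filter_all_true; intros z Hz.
  apply negb_true_iff, Nat.eqb_neq; intros ->; contradiction.
Qed.

Lemma del_app x a b : del x (a ++ b) = del x a ++ del x b.
Proof. unfold del; apply filter_app. Qed.

Lemma del_split x p q : ~ In x p -> ~ In x q -> del x (p ++ x :: q) = p ++ q.
Proof.
  intros Hp Hq; rewrite del_app; unfold del at 2; simpl; rewrite Nat.eqb_refl; simpl.
  fold (del x q); rewrite !del_notin; auto.
Qed.

Lemma in_del y x L : In y (del x L) <-> In y L /\ y <> x.
Proof.
  unfold del; rewrite filter_In, negb_true_iff, Nat.eqb_neq; intuition.
Qed.

Lemma pos_split x p q : ~ In x p -> pos x (p ++ x :: q) = length p.
Proof.
  induction p as [|a p IH]; intro H; simpl.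
  - rewrite Nat.eqb_refl; auto.
  - destruct (Nat.eqb_spec x a) as [e|e].
    + exfalso; apply H; left; auto.
    + f_equal; apply IH; intro; apply H; right; auto.
Qed.

Lemma pos_head x q : pos x (x :: q) = 0.
Proof. simpl; rewrite Nat.eqb_refl; auto. Qed.

Lemma occ_snoc y h a : occ y (h ++ [a]) = occ y h + (if Nat.eqb a y then 1 else 0).
Proof.
  unfold occ; rewrite count_occ_app; simpl.
  destruct (Nat.eq_dec a y), (Nat.eqb_spec a y); subst; try contradiction; lia.
Qed.

(** All the algorithms below keep the list in the shape [phase_list l x] just before
    the three requests to [a_x]: first [a_{x+1}, ..., a_l], then [a_1, ..., a_x]. *)

Definition phase_list (l x : nat) : list nat := seq (S x) (l - x) ++ seq 1 x.

Definition others (l x : nat) : list nat := seq (S x) (l - x) ++ seq 1 (x - 1).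

Lemma in_others l x z : x <= l -> In z (others l x) <-> 1 <= z <= l /\ z <> x.
Proof. intro; unfold others; rewrite in_app_iff, !in_seq; lia. Qed.

Lemma others_notin l x : ~ In x (others l x).
Proof. unfold others; rewrite in_app_iff, !in_seq; lia. Qed.

Lemma others_length l x : 1 <= x <= l -> length (others l x) = l - 1.
Proof. intros; unfold others; rewrite length_app, !length_seq; lia. Qed.

Lemma phase_list_split l x : 1 <= x <= l ->
  phase_list l x = others l x ++ [x] /\ phase_list l (x - 1) = x :: others l x.
Proof.
  intros H; destruct x as [|k]; [lia|].
  unfold phase_list, others; split.
  - rewrite seq_S, app_assoc; simpl; rewrite Nat.sub_0_r; reflexivity.
  - replace (S k - 1) with k by lia. replace (l - k) with (S (l - S k)) by lia.
    reflexivity.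
Qed.

Lemma phase_list_0 l : phase_list l 0 = seq 1 l.
Proof. unfold phase_list; simpl; rewrite Nat.sub_0_r, app_nil_r; auto. Qed.

Lemma phase_list_l l : phase_list l l = seq 1 l.
Proof. unfold phase_list; rewrite Nat.sub_diag; auto. Qed.

Lemma access_cost_back l x : 1 <= x <= l -> access_cost x (others l x ++ [x]) = l.
Proof.
  intros; unfold access_cost; rewrite pos_split, others_length; auto using others_notin; lia.
Qed.

Lemma access_cost_front l x : access_cost x (x :: others l x) = 1.
Proof. unfold access_cost; rewrite pos_head; auto. Qed.

Fixpoint final_list (A : online_rule) (h L σ : list nat) : list nat :=
  match σ with [] => L | x :: σ' => final_list A (h ++ [x]) (A h L x) σ' end.

Lemma run_online_app A a : forall b h L, run_online A h L (a ++ b) =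
  run_online A h L a + run_online A (h ++ a) (final_list A h L a) b.
Proof.
  induction a as [|x a IH]; intros b h L; simpl.
  - rewrite app_nil_r; auto.
  - rewrite IH, <- app_assoc; simpl; lia.
Qed.

Lemma final_list_app A a : forall b h L, final_list A h L (a ++ b) =
  final_list A (h ++ a) (final_list A h L a) b.
Proof.
  induction a as [|x a IH]; intros b h L; simpl.
  - rewrite app_nil_r; auto.
  - rewrite IH, <- app_assoc; auto.
Qed.

Definition triple (a : nat) : list nat := [a; a; a].

Lemma round_unfold l : round l = flat_map triple (rev (seq 1 l)).
Proof. reflexivity. Qed.

Section Rounds.
Variable A : online_rule.
Variable l : nat.
Variable cost : nat -> nat.
Variable Inv : nat -> nat -> list nat -> Prop.

Hypothesis triple_step : forall r x h, 1 <= x <= l -> Inv r x h ->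
  run_online A h (phase_list l x) (triple x) = cost r /\
  final_list A h (phase_list l x) (triple x) = phase_list l (x - 1) /\
  Inv r (x - 1) (h ++ triple x).
Hypothesis next_round : forall r h, Inv r 0 h -> Inv (S r) l h.

Lemma partial_round r x : x <= l -> forall h, Inv r x h ->
  run_online A h (phase_list l x) (flat_map triple (rev (seq 1 x))) = x * cost r /\
  final_list A h (phase_list l x) (flat_map triple (rev (seq 1 x))) = phase_list l 0 /\
  Inv r 0 (h ++ flat_map triple (rev (seq 1 x))).
Proof.
  induction x as [|x IH]; intros Hx h HI.
  - simpl; rewrite app_nil_r; auto.
  - rewrite seq_S, rev_unit.
    change (flat_map triple (1 + x :: rev (seq 1 x)))
      with (triple (S x) ++ flat_map triple (rev (seq 1 x))).
    destruct (triple_step r (S x) h) as [C1 [F1 I1]]; [lia|auto|].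
    replace (S x - 1) with x in * by lia.
    destruct (IH ltac:(lia) _ I1) as [C2 [F2 I2]].
    rewrite run_online_app, final_list_app, C1, F1, C2, F2, app_assoc; repeat split; auto; lia.
Qed.

Lemma full_round r h : Inv r l h ->
  run_online A h (seq 1 l) (round l) = l * cost r /\
  final_list A h (seq 1 l) (round l) = seq 1 l /\ Inv (S r) l (h ++ round l).
Proof.
  intros HI; destruct (partial_round r l (le_n _) h HI) as [C [F I]].
  rewrite phase_list_l, phase_list_0 in *; rewrite round_unfold; auto.
Qed.

Variable C : nat.
Hypothesis cost_pair : forall r, cost r + cost (S r) = C.

Lemma rounds_cost s : forall r h, Inv r l h ->
  run_online A h (seq 1 l) (concat (repeat (round l) (2 * s))) = s * (l * C).
Proof.
  induction s as [|s IH]; intros r h HI; [reflexivity|].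
  replace (2 * S s) with (S (S (2 * s))) by lia.
  change (concat (repeat (round l) (S (S (2 * s)))))
    with (round l ++ round l ++ concat (repeat (round l) (2 * s))).
  destruct (full_round r h HI) as [C1 [F1 I1]].
  destruct (full_round (S r) _ I1) as [C2 [F2 I2]].
  rewrite run_online_app, C1, F1, run_online_app, C2, F2, (IH _ _ I2).
  rewrite <- (cost_pair r); nia.
Qed.
End Rounds.

Lemma mtf_back l x : 1 <= x <= l -> move_to_front x (others l x ++ [x]) = x :: others l x.
Proof.
  intros; unfold move_to_front.
  rewrite (del_split x (others l x) []), app_nil_r; auto using others_notin.
Qed.

Lemma mtf_front l x : move_to_front x (x :: others l x) = x :: others l x.
Proof.
  unfold move_to_front; f_equal; apply (del_split x []); auto using others_notin.
Qed.

Definition mtf_when (f : nat -> bool) : online_rule := fun hist L x =>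
  if f (S (occ x hist)) then move_to_front x L else L.

Lemma MTFO_rule_eq : MTFO_rule = mtf_when Nat.odd.
Proof. reflexivity. Qed.

Lemma MTFE_rule_eq : MTFE_rule = mtf_when Nat.even.
Proof. reflexivity. Qed.

Section ParityRule.
Variable f : nat -> bool.
Hypothesis f_alt : forall n, f (S n) = negb (f n).

(** A triple to the last item costs [l + 2] when the first of the three requests
    triggers the move, and [2l + 1] when only the second one does. *)
Definition parity_triple_cost (l n : nat) : nat := if f (S n) then l + 2 else 2 * l + 1.

Lemma mtf_when_back l x h : 1 <= x <= l ->
  mtf_when f h (others l x ++ [x]) x =
  if f (S (occ x h)) then x :: others l x else others l x ++ [x].
Proof. intros; unfold mtf_when; rewrite mtf_back by auto; reflexivity. Qed.

Lemma mtf_when_front l x h : mtf_when f h (x :: others l x) x = x :: others l x.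
Proof. unfold mtf_when; rewrite mtf_front; destruct (f _); reflexivity. Qed.

Lemma parity_triple l x h : 1 <= x <= l ->
  run_online (mtf_when f) h (others l x ++ [x]) (triple x) = parity_triple_cost l (occ x h) /\
  final_list (mtf_when f) h (others l x ++ [x]) (triple x) = x :: others l x.
Proof.
  intros Hx; unfold triple, parity_triple_cost; cbn [run_online final_list].
  rewrite (mtf_when_back l x h) by auto.
  destruct (f (S (occ x h))) eqn:E1.
  - rewrite !mtf_when_front, access_cost_back, !access_cost_front by auto; split; auto; lia.
  - assert (E2 : f (S (occ x (h ++ [x]))) = true)
      by (rewrite occ_snoc, Nat.eqb_refl, Nat.add_1_r, f_alt, E1; reflexivity).
    rewrite (mtf_when_back l x), E2, mtf_when_front, !access_cost_back,
      access_cost_front by auto; split; auto; lia.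
Qed.
End ParityRule.

Lemma occ_triple y h a : occ y (h ++ triple a) = occ y h + (if Nat.eqb a y then 3 else 0).
Proof.
  change (h ++ triple a) with (h ++ [a] ++ [a] ++ [a]).
  rewrite !app_assoc, !occ_snoc; destruct (Nat.eqb a y); lia.
Qed.

Definition request_counts (l r x : nat) (h : list nat) : Prop :=
  forall y, 1 <= y <= l -> occ y h = if y <=? x then 3 * r else 3 * r + 3.

Lemma request_counts_start l : request_counts l 0 l [].
Proof. intros y Hy; unfold occ; simpl; destruct (Nat.leb_spec y l); lia. Qed.

Lemma request_counts_next_round l r h : request_counts l r 0 h -> request_counts l (S r) l h.
Proof.
  intros H y Hy; rewrite H by auto.
  destruct (Nat.leb_spec y 0), (Nat.leb_spec y l); lia.
Qed.

Lemma request_counts_step l r x h : 1 <= x <= l ->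
  request_counts l r x h -> request_counts l r (x - 1) (h ++ triple x).
Proof.
  intros Hx H y Hy; rewrite occ_triple, H by auto.
  destruct (Nat.eqb_spec x y), (Nat.leb_spec y x), (Nat.leb_spec y (x - 1)); lia.
Qed.

(** Under an alternating test, two consecutive rounds cost [(l + 2) + (2l + 1)] per item. *)
Lemma parity_rule_cost f : (forall n, f (S n) = negb (f n)) -> forall l s,
  online_cost (mtf_when f) (init_list l) (sigma_gamma l s) = s * (l * (3 * l + 3)).
Proof.
  intros f_alt l s; unfold online_cost, sigma_gamma, init_list.
  apply (rounds_cost (mtf_when f) l (fun r => parity_triple_cost f l (3 * r))
           (request_counts l)) with (r := 0);
    auto using request_counts_next_round, request_counts_start.
  - intros r x h Hx HI; destruct (phase_list_split l x Hx) as [E1 E2]; rewrite E1, E2.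
    assert (Hocc : occ x h = 3 * r) by (rewrite HI, Nat.leb_refl by lia; reflexivity).
    rewrite <- Hocc; destruct (parity_triple f f_alt l x h Hx) as [C F].
    repeat split; auto using request_counts_step.
  - intros r; unfold parity_triple_cost.
    replace (S (3 * S r)) with (S (S (S (S (3 * r))))) by lia.
    rewrite !f_alt; destruct (f (3 * r)); simpl; lia.
Qed.

(** MTFO and MTFE both cost [s l (3l + 3)]: they differ only in which rounds are cheap. *)
Lemma MTFO_value l s : MTFO_cost (init_list l) (sigma_gamma l s) = s * (l * (3 * l + 3)).
Proof.
  unfold MTFO_cost; rewrite MTFO_rule_eq; apply parity_rule_cost.
  intro n; rewrite Nat.odd_succ, Nat.negb_odd; reflexivity.
Qed.

Lemma MTFE_value l s : MTFE_cost (init_list l) (sigma_gamma l s) = s * (l * (3 * l + 3)).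
Proof.
  unfold MTFE_cost; rewrite MTFE_rule_eq; apply parity_rule_cost.
  intro n; rewrite Nat.even_succ, Nat.negb_even; reflexivity.
Qed.

Definition twice_since (h : list nat) (y z : nat) : Prop := 2 <= occ z (take_until y (rev h)).

Lemma occ_cons z a T : occ z (a :: T) = occ z T + (if Nat.eqb a z then 1 else 0).
Proof.
  unfold occ; simpl; destruct (Nat.eq_dec a z), (Nat.eqb_spec a z); try contradiction; lia.
Qed.

Lemma twice_since_triple h x y z : y <> x ->
  (z = x \/ twice_since h y z) -> twice_since (h ++ triple x) y z.
Proof.
  intros Hyx Hz; unfold twice_since.
  rewrite rev_app_distr; change (rev (triple x)) with [x; x; x]; simpl.
  destruct (Nat.eqb_spec x y); [congruence|].
  rewrite !occ_cons; destruct Hz as [->|Hz]; [rewrite Nat.eqb_refl|unfold twice_since in Hz]; lia.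
Qed.

Definition ts_invariant (l r x : nat) (h : list nat) : Prop :=
  (r = 0 -> forall y, 1 <= y <= x -> ~ In y h) /\
  (r <> 0 -> forall y, 1 <= y <= x -> In y h /\
     forall z, 1 <= z <= l -> (z < y \/ x < z) -> twice_since h y z) /\
  (forall y, x < y <= l -> In y h /\ forall z, x < z < y -> twice_since h y z).

Lemma ts_invariant_start l : ts_invariant l 0 l [].
Proof. repeat split; intros; simpl in *; auto; lia. Qed.

Lemma ts_invariant_next_round l r h : ts_invariant l r 0 h -> ts_invariant l (S r) l h.
Proof.
  intros [_ [_ Hserved]]; split; [lia|split; [|lia]].
  intros _ y Hy; destruct (Hserved y ltac:(lia)) as [Hin Hz]; split; auto.
  intros z Hz1 Hz2; apply Hz; lia.
Qed.

Lemma ts_invariant_step l r x h : 1 <= x <= l ->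
  ts_invariant l r x h -> ts_invariant l r (x - 1) (h ++ triple x).
Proof.
  intros Hx [Hfresh [Hold Hserved]]; split; [|split].
  - intros Hr y Hy; rewrite in_app_iff; intros [Hin|Hin].
    + exact (Hfresh Hr y ltac:(lia) Hin).
    + destruct Hin as [|[|[|[]]]]; lia.
  - intros Hr y Hy; destruct (Hold Hr y ltac:(lia)) as [Hin Hz].
    split; [apply in_or_app; auto|].
    intros z Hz1 Hz2; apply twice_since_triple; [lia|].
    destruct (Nat.eq_dec z x); [auto|right; apply Hz; lia].
  - intros y Hy; split.
    + destruct (Nat.eq_dec y x) as [->|Hne]; apply in_or_app;
        [right; left; auto|left; apply Hserved; lia].
    + intros z Hz; destruct (Nat.eq_dec y x) as [->|Hne]; [lia|].
      apply twice_since_triple; [auto|].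
      destruct (Nat.eq_dec z x); [auto|right; apply Hserved; lia].
Qed.

Lemma existsb_eqb_In x h : existsb (Nat.eqb x) h = true <-> In x h.
Proof.
  rewrite existsb_exists; split.
  - intros [y [Hy E]]; apply Nat.eqb_eq in E; subst; auto.
  - intros; exists x; rewrite Nat.eqb_refl; auto.
Qed.

Lemma firstn_before_back l x : 1 <= x <= l ->
  firstn (pos x (others l x ++ [x])) (others l x ++ [x]) = others l x.
Proof.
  intros; rewrite pos_split by apply others_notin.
  rewrite firstn_app, firstn_all, Nat.sub_diag; apply app_nil_r.
Qed.

(** First request of a triple: no item in front of [a_x] qualifies, so nothing moves. *)
Lemma ts_first_request l r x h : 1 <= x <= l -> ts_invariant l r x h ->
  TS_rule h (others l x ++ [x]) x = others l x ++ [x].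
Proof.
  intros Hx [Hfresh [Hold _]]; unfold TS_rule.
  destruct (Nat.eq_dec r 0) as [E|E].
  - destruct (existsb (Nat.eqb x) h) eqn:Ein; auto.
    apply existsb_eqb_In in Ein; destruct (Hfresh E x ltac:(lia) Ein).
  - destruct (Hold E x ltac:(lia)) as [Hin Hz]; apply existsb_eqb_In in Hin; rewrite Hin.
    rewrite firstn_before_back, filter_all_false; auto.
    intros z Hz'; apply in_others in Hz'; [|lia].
    apply Nat.leb_gt; apply (Hz z); lia.
Qed.

(** Second request: nothing was requested since the first one, so [a_x] jumps to the front. *)
Lemma ts_second_request l x h : 1 <= x <= l ->
  TS_rule (h ++ [x]) (others l x ++ [x]) x = x :: others l x.
Proof.
  intros Hx; unfold TS_rule.
  assert (existsb (Nat.eqb x) (h ++ [x]) = true) as ->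
    by (apply existsb_eqb_In, in_or_app; right; left; auto).
  rewrite rev_unit; simpl (take_until x (x :: _)); rewrite Nat.eqb_refl.
  rewrite firstn_before_back, filter_all_true by auto.
  rewrite (del_split x (others l x) []), app_nil_r by auto using others_notin.
  destruct (others l x) as [|y0 p]; auto; simpl; rewrite Nat.eqb_refl; auto.
Qed.

Lemma ts_at_front l x h : TS_rule h (x :: others l x) x = x :: others l x.
Proof.
  unfold TS_rule; rewrite pos_head; simpl; destruct (existsb (Nat.eqb x) h); auto.
Qed.

(** Every triple costs [l + l + 1] under TS. *)
Lemma TS_value l s : TS_cost (init_list l) (sigma_gamma l s) = s * (l * (4 * l + 2)).
Proof.
  unfold TS_cost, online_cost, sigma_gamma, init_list.
  apply (rounds_cost TS_rule l (fun _ => 2 * l + 1) (ts_invariant l)) with (r := 0);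
    auto using ts_invariant_next_round, ts_invariant_start; [|intros; lia].
  intros r x h Hx HI; destruct (phase_list_split l x Hx) as [E1 E2]; rewrite E1, E2.
  unfold triple; cbn [run_online final_list].
  rewrite (ts_first_request l r x h), ts_second_request, ts_at_front,
    !access_cost_back, access_cost_front by auto.
  split; [lia|split; [reflexivity|apply ts_invariant_step; auto]].
Qed.

Definition mtf_schedule : schedule := fun _ => ([], 0).

(** The same algorithm as an online rule, so that [rounds_cost] applies to it. *)
Definition MTF_rule : online_rule := fun _ L x => free_move x 0 L.

Lemma mtf_schedule_online σ : forall t h L,
  run_offline mtf_schedule t L σ = run_online MTF_rule h L σ.
Proof.
  induction σ as [|x σ IH]; intros t h L; simpl; auto.
Qed.

Lemma free_move_back l x : 1 <= x <= l -> free_move x 0 (others l x ++ [x]) = x :: others l x.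
Proof.
  intros Hx; unfold free_move; rewrite pos_split by apply others_notin.
  rewrite (del_split x (others l x) []), app_nil_r by auto using others_notin.
  destruct (others l x); reflexivity.
Qed.

Lemma free_move_head x q : free_move x 0 (x :: q) = x :: q.
Proof. unfold free_move; rewrite pos_head; reflexivity. Qed.

Lemma MTF_offline_cost l s :
  offline_cost mtf_schedule (init_list l) (sigma_gamma l s) = s * (l * (2 * l + 4)).
Proof.
  unfold offline_cost; rewrite (mtf_schedule_online _ 0 []).
  unfold sigma_gamma, init_list.
  refine (rounds_cost MTF_rule l (fun _ => l + 2) (fun _ _ _ => True) _ _ _ _ s 0 [] I);
    auto; [|intros; lia].
  intros r x h Hx _; destruct (phase_list_split l x Hx) as [E1 E2]; rewrite E1, E2.
  unfold triple; cbn [run_online final_list]; unfold MTF_rule.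
  rewrite free_move_back, !free_move_head, access_cost_back, !access_cost_front by auto.
  repeat split; lia.
Qed.

Definition count_if (f : nat -> bool) (L : list nat) : nat := length (filter f L).

Fixpoint inversions (k : nat -> nat) (L : list nat) : nat :=
  match L with
  | [] => 0
  | a :: L' => count_if (fun b => k b <? k a) L' + inversions k L'
  end.

Lemma count_if_app f a b : count_if f (a ++ b) = count_if f a + count_if f b.
Proof. unfold count_if; rewrite filter_app, length_app; auto. Qed.

Lemma count_if_cons f a b : count_if f (a :: b) = (if f a then 1 else 0) + count_if f b.
Proof. unfold count_if; simpl; destruct (f a); auto. Qed.

Lemma count_if_le f a : count_if f a <= length a.
Proof. apply filter_length_le. Qed.

Lemma count_if_all f a : (forall z, In z a -> f z = true) -> count_if f a = length a.
Proof. intros; unfold count_if; rewrite filter_all_true; auto. Qed.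

Lemma count_if_none f a : (forall z, In z a -> f z = false) -> count_if f a = 0.
Proof. intros; unfold count_if; rewrite filter_all_false; auto. Qed.

Lemma count_if_swap f j : forall L, count_if f (swap_adj j L) = count_if f L.
Proof.
  induction j as [|j IH]; intros [|a L]; simpl; auto.
  - destruct L as [|b L]; auto; rewrite !count_if_cons; lia.
  - rewrite !(count_if_cons f a), IH; auto.
Qed.

Lemma inversions_swap k j : forall L, inversions k (swap_adj j L) <= inversions k L + 1.
Proof.
  induction j as [|j IH]; intros [|a L]; simpl; auto.
  - destruct L as [|b L]; simpl; [lia|].
    rewrite !count_if_cons; destruct (Nat.ltb_spec (k a) (k b)), (Nat.ltb_spec (k b) (k a)); lia.
  - specialize (IH L); rewrite count_if_swap; lia.
Qed.

Lemma inversions_split k x q : forall p, inversions k (p ++ x :: q) =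
  inversions k (p ++ q) + count_if (fun b => k x <? k b) p + count_if (fun b => k b <? k x) q.
Proof.
  induction p as [|a p IH]; simpl; [unfold count_if at 2; simpl; lia|].
  rewrite IH, !count_if_app, !count_if_cons; simpl; lia.
Qed.

Lemma inversions_shift k1 k2 c L : (forall y, In y L -> k1 y = k2 y + c) ->
  inversions k1 L = inversions k2 L.
Proof.
  induction L as [|a L IH]; intros H; simpl; auto.
  rewrite IH by (intros; apply H; right; auto); f_equal.
  unfold count_if; f_equal; apply filter_ext_in; intros b Hb.
  rewrite !H by (simpl; auto); destruct (Nat.ltb_spec (k2 b + c) (k2 a + c)),
    (Nat.ltb_spec (k2 b) (k2 a)); auto; lia.
Qed.

Lemma inversions_seq a n : inversions (fun y => y) (seq a n) = 0.
Proof.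
  revert a; induction n as [|n IH]; intros a; simpl; auto.
  rewrite IH, count_if_none; auto.
  intros z Hz; apply in_seq in Hz; apply Nat.ltb_ge; lia.
Qed.

(** Accessing an item [x] whose key is maximal costs at least the inversions involving
    [x]: together they pay for a full pass over the list. *)
Lemma access_top_key k x L : NoDup L -> In x L ->
  (forall y, In y L -> y <> x -> k y < k x) ->
  length L + inversions k (del x L) <= access_cost x L + inversions k L.
Proof.
  intros ND Hin Htop; destruct (in_split _ _ Hin) as [p [q ->]].
  pose proof (NoDup_remove_2 _ _ _ ND) as Hx; rewrite in_app_iff in Hx.
  assert (Hq : count_if (fun b => k b <? k x) q = length q).
  { apply count_if_all; intros z Hz; apply Nat.ltb_lt, Htop;
      [apply in_or_app; simpl; auto|intros ->; tauto]. }
  unfold access_cost; rewrite del_split, pos_split, inversions_split, Hq, length_app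
    by tauto; simpl; lia.
Qed.

Lemma inversions_bottom_key k x L : NoDup L -> In x L ->
  (forall y, In y L -> y <> x -> k x < k y) ->
  inversions k L <= inversions k (del x L) + pos x L.
Proof.
  intros ND Hin Hbot; destruct (in_split _ _ Hin) as [p [q ->]].
  pose proof (NoDup_remove_2 _ _ _ ND) as Hx; rewrite in_app_iff in Hx.
  assert (Hq : count_if (fun b => k b <? k x) q = 0).
  { apply count_if_none; intros z Hz; apply Nat.ltb_ge; enough (k x < k z) by lia.
    apply Hbot; [apply in_or_app; simpl; auto|intros ->; tauto]. }
  rewrite del_split, pos_split, inversions_split, Hq by tauto.
  pose proof (count_if_le (fun b => k x <? k b) p); lia.
Qed.

Lemma perm_swap_adj j : forall L, Permutation (swap_adj j L) L.
Proof.
  induction j as [|j IH]; intros [|a L]; simpl; auto.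
  destruct L as [|b L]; auto; apply perm_swap.
Qed.

Lemma del_swap_adj x j : forall L, del x (swap_adj j L) = del x L \/
  exists j', del x (swap_adj j L) = swap_adj j' (del x L).
Proof.
  unfold del; induction j as [|j IH]; intros [|a L]; simpl; auto.
  - destruct L as [|b L]; auto; simpl.
    destruct (Nat.eqb_spec x a), (Nat.eqb_spec x b); simpl; auto.
    right; exists 0; auto.
  - destruct (IH L) as [E|[j' E]]; destruct (Nat.eqb_spec x a); simpl; rewrite ?E; auto.
    + right; exists j'; auto.
    + right; exists (S j'); auto.
Qed.

Definition apply_swaps (P L : list nat) : list nat := fold_left (fun L j => swap_adj j L) P L.

Lemma apply_swaps_perm P : forall L, Permutation (apply_swaps P L) L.
Proof.
  unfold apply_swaps; induction P as [|j P IH]; intros L; simpl; auto.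
  eapply perm_trans; [apply IH|apply perm_swap_adj].
Qed.

Lemma apply_swaps_inversions k x P : forall L,
  inversions k (apply_swaps P L) <= inversions k L + length P /\
  inversions k (del x (apply_swaps P L)) <= inversions k (del x L) + length P.
Proof.
  unfold apply_swaps; induction P as [|j P IH]; intros L; simpl; [lia|].
  destruct (IH (swap_adj j L)) as [I1 I2]; pose proof (inversions_swap k j L).
  assert (inversions k (del x (swap_adj j L)) <= inversions k (del x L) + 1).
  { destruct (del_swap_adj x j L) as [->|[j' ->]]; [lia|apply inversions_swap]. }
  lia.
Qed.

Lemma del_idem x L : del x (del x L) = del x L.
Proof. apply del_notin; rewrite in_del; tauto. Qed.

Lemma del_insert_at x k : forall M, del x (insert_at k x M) = del x M.
Proof.
  unfold del; induction k as [|k IH]; intros [|a M]; simpl; rewrite ?Nat.eqb_refl; simpl; auto.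
  destruct (Nat.eqb x a); simpl; rewrite ?IH; auto.
Qed.

Lemma pos_insert_at x k : forall M, pos x (insert_at k x M) <= k.
Proof.
  induction k as [|k IH]; intros [|a M]; simpl; rewrite ?Nat.eqb_refl; try lia.
  destruct (Nat.eqb x a); [lia|]; specialize (IH M); lia.
Qed.

Lemma perm_insert_at x k : forall M, Permutation (insert_at k x M) (x :: M).
Proof.
  induction k as [|k IH]; intros [|a M]; simpl; auto.
  eapply perm_trans; [apply perm_skip, IH|apply perm_swap].
Qed.

Lemma free_move_del x k L : del x (free_move x k L) = del x L.
Proof.
  unfold free_move; destruct (Nat.ltb k (pos x L)); auto.
  rewrite del_insert_at, del_idem; auto.
Qed.

Lemma free_move_pos x k L : pos x (free_move x k L) <= pos x L.
Proof.
  unfold free_move; destruct (Nat.ltb_spec k (pos x L)); auto.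
  pose proof (pos_insert_at x k (del x L)); lia.
Qed.

Lemma free_move_perm x k L : NoDup L -> In x L -> Permutation (free_move x k L) L.
Proof.
  intros ND Hin; unfold free_move; destruct (Nat.ltb k _); auto.
  destruct (in_split _ _ Hin) as [p [q ->]].
  pose proof (NoDup_remove_2 _ _ _ ND) as Hx; rewrite in_app_iff in Hx.
  rewrite del_split by tauto.
  eapply perm_trans; [apply perm_insert_at|apply Permutation_middle].
Qed.

Lemma perm_seq_in l M y : Permutation M (seq 1 l) -> In y M <-> 1 <= y <= l.
Proof.
  intros HM; transitivity (In y (seq 1 l));
    [split; apply Permutation_in; auto using Permutation_sym|rewrite in_seq; lia].
Qed.

Lemma perm_seq_nodup l M : Permutation M (seq 1 l) -> NoDup M.
Proof. intros HM; apply (Permutation_NoDup (Permutation_sym HM)), seq_NoDup. Qed.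

Lemma serve_request l sch t L x σ : Permutation L (seq 1 l) -> 1 <= x <= l ->
  exists c L1 L2, Permutation L1 (seq 1 l) /\ Permutation L2 (seq 1 l) /\
    run_offline sch t L (x :: σ) = c + access_cost x L1 + run_offline sch (S t) L2 σ /\
    (forall k, inversions k L1 <= inversions k L + c /\
               inversions k (del x L1) <= inversions k (del x L) + c) /\
    del x L2 = del x L1 /\ pos x L2 <= pos x L1.
Proof.
  intros HP Hx; cbn [run_offline]; destruct (sch t) as [P k].
  exists (length P), (apply_swaps P L), (free_move x k (apply_swaps P L)).
  assert (HP1 : Permutation (apply_swaps P L) (seq 1 l))
    by (eapply perm_trans; [apply apply_swaps_perm|auto]).
  repeat split; try apply apply_swaps_inversions; auto using free_move_del, free_move_pos.
  eapply perm_trans; [apply free_move_perm|]; auto.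
  - exact (perm_seq_nodup l _ HP1).
  - apply (perm_seq_in l _ x HP1); lia.
Qed.

(** ** The amortized lower bound
    [phase_key l x] orders the items as [phase_list l x]: [a_{x+1}..a_l] first, then
    [a_1..a_x]. Relative to it, [a_x] is last before its triple and first afterwards. *)
Definition phase_key (l x y : nat) : nat := if x <? y then y else y + l.

Lemma phase_key_top l x y : 1 <= x <= l -> 1 <= y <= l -> y <> x ->
  phase_key l x y < phase_key l x x.
Proof. intros; unfold phase_key; destruct (Nat.ltb_spec x y), (Nat.ltb_spec x x); lia. Qed.

Lemma phase_key_bottom l x y : 1 <= x <= l -> 1 <= y <= l -> y <> x ->
  phase_key l (x - 1) x < phase_key l (x - 1) y.
Proof.
  intros; unfold phase_key; destruct (Nat.ltb_spec (x - 1) y), (Nat.ltb_spec (x - 1) x); lia.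
Qed.

Lemma phase_key_other l x y : 1 <= x -> y <> x -> phase_key l x y = phase_key l (x - 1) y.
Proof. intros; unfold phase_key; destruct (Nat.ltb_spec (x - 1) y), (Nat.ltb_spec x y); lia. Qed.

(** Three requests to [a_x] cost at least [l + 2] plus the potential drop from
    [phase_key l x] to [phase_key l (x - 1)]: the first access plus the inversions of
    the top item [a_x] amount to [l]; the other two accesses cost one more than the
    final position of [a_x], which bounds its inversions as bottom item; and every
    paid exchange is matched by the potential of the list without [a_x]. *)
Lemma offline_triple_amortized l sch t L x σ : Permutation L (seq 1 l) -> 1 <= x <= l ->
  exists L', Permutation L' (seq 1 l) /\
    l + 2 + inversions (phase_key l (x - 1)) L' + run_offline sch (S (S (S t))) L' σ <=
    run_offline sch t L (triple x ++ σ) + inversions (phase_key l x) L.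
Proof.
  intros HP Hx; set (k := phase_key l x); set (k' := phase_key l (x - 1)).
  destruct (serve_request l sch t L x (x :: x :: σ) HP Hx)
    as [c1 [L1 [M1 [HL1 [HM1 [R1 [I1 [D1 _]]]]]]]].
  destruct (serve_request l sch (S t) M1 x (x :: σ) HM1 Hx)
    as [c2 [L2 [M2 [_ [HM2 [R2 [I2 [D2 _]]]]]]]].
  destruct (serve_request l sch (S (S t)) M2 x σ HM2 Hx)
    as [c3 [L3 [M3 [_ [HM3 [R3 [I3 [D3 P3]]]]]]]].
  exists M3; split; [auto|].
  assert (Top : length L1 + inversions k (del x L1) <= access_cost x L1 + inversions k L1).
  { apply access_top_key;
      [apply (perm_seq_nodup l), HL1|apply (perm_seq_in l _ x HL1); lia|].
    intros y Hy Hyx; apply phase_key_top; [lia|apply (perm_seq_in l L1); auto|auto]. }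
  assert (Bottom : inversions k' M3 <= inversions k' (del x M3) + pos x M3).
  { apply inversions_bottom_key;
      [apply (perm_seq_nodup l), HM3|apply (perm_seq_in l _ x HM3); lia|].
    intros y Hy Hyx; apply phase_key_bottom; [lia|apply (perm_seq_in l M3); auto|auto]. }
  assert (Same : inversions k' (del x M3) = inversions k (del x M3)).
  { apply inversions_shift with (c := 0); intros y Hy; apply in_del in Hy.
    rewrite Nat.add_0_r; symmetry; apply phase_key_other; [lia|tauto]. }
  rewrite (Permutation_length HL1), length_seq in Top.
  destruct (I1 k) as [I1a _]; destruct (I2 k) as [_ I2b]; destruct (I3 k) as [_ I3b].
  rewrite D3 in Same, Bottom; rewrite D2 in I3b; rewrite D1 in I2b.
  unfold triple; simpl app; rewrite R1, R2, R3; unfold access_cost in *; lia.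
Qed.

Lemma offline_partial_round l x : x <= l -> forall sch t L σ, Permutation L (seq 1 l) ->
  exists t' L', Permutation L' (seq 1 l) /\
    x * (l + 2) + inversions (phase_key l 0) L' + run_offline sch t' L' σ <=
    run_offline sch t L (flat_map triple (rev (seq 1 x)) ++ σ) + inversions (phase_key l x) L.
Proof.
  induction x as [|x IH]; intros Hx sch t L σ HP.
  - exists t, L; split; auto; simpl; lia.
  - rewrite seq_S, rev_unit.
    change (flat_map triple (1 + x :: rev (seq 1 x)) ++ σ)
      with (triple (S x) ++ (flat_map triple (rev (seq 1 x)) ++ σ)).
    destruct (offline_triple_amortized l sch t L (S x) (flat_map triple (rev (seq 1 x)) ++ σ)
      HP ltac:(lia)) as [L3 [HP3 H3]].
    replace (S x - 1) with x in H3 by lia.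
    destruct (IH ltac:(lia) sch (S (S (S t))) L3 σ HP3) as [t' [L' [HP' H']]].
    exists t', L'; split; auto; lia.
Qed.

Lemma phase_key_round_ends l L : Permutation L (seq 1 l) ->
  inversions (phase_key l l) L = inversions (phase_key l 0) L /\
  inversions (phase_key l 0) L = inversions (fun y => y) L.
Proof.
  intros HP; split; [apply inversions_shift with (c := l)|apply inversions_shift with (c := 0)];
    intros y Hy; apply (Permutation_in _ HP), in_seq in Hy; unfold phase_key;
    destruct (Nat.ltb_spec l y), (Nat.ltb_spec 0 y); lia.
Qed.

Lemma offline_rounds_lower_bound l n : forall sch t L, Permutation L (seq 1 l) ->
  n * (l * (l + 2)) <=
  run_offline sch t L (concat (repeat (round l) n)) + inversions (fun y => y) L.
Proof.
  induction n as [|n IH]; intros sch t L HP; [simpl; lia|].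
  change (concat (repeat (round l) (S n))) with (round l ++ concat (repeat (round l) n)).
  destruct (offline_partial_round l l (le_n _) sch t L (concat (repeat (round l) n)) HP)
    as [t' [L' [HP' H']]].
  specialize (IH sch t' L' HP').
  destruct (phase_key_round_ends l L HP) as [E1 E2].
  destruct (phase_key_round_ends l L' HP') as [_ E3].
  rewrite <- round_unfold in H'; rewrite Nat.mul_succ_l; lia.
Qed.

Lemma OPT_value l s : OPT (init_list l) (sigma_gamma l s) = s * (l * (2 * l + 4)).
Proof.
  unfold OPT; destruct (opt_exists (init_list l) (sigma_gamma l s)) as [c [[sch Hs] Hmin]]; simpl.
  pose proof (Hmin mtf_schedule) as Hup; rewrite MTF_offline_cost in Hup.
  pose proof (offline_rounds_lower_bound l (2 * s) sch 0 (init_list l) (Permutation_refl _))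
    as Hlow.
  unfold init_list in Hlow; rewrite inversions_seq in Hlow.
  unfold offline_cost, sigma_gamma, init_list in Hs; rewrite Hs in Hlow; nia.
Qed.

(** Imported last: the Reals library has its own [pos], which would shadow the list position. *)
From Stdlib Require Import Reals Lra ZArith.

Lemma linear_little_o_sq (c : R) : (0 <= c)%R -> little_o_sq (fun l => c * INR l)%R.
Proof.
  intros Hc eps Heps.
  set (u := (c / eps)%R).
  assert (Hu : (0 <= u)%R) by (apply Rmult_le_pos; [auto|left; apply Rinv_0_lt_compat; lra]).
  destruct (archimed u) as [Hup _].
  exists (Z.to_nat (up u)); intros l Hl.
  apply le_INR in Hl; rewrite INR_IZR_INZ, Z2Nat.id in Hl by (apply le_IZR; lra).
  pose proof (pos_INR l).
  rewrite Rabs_right by (apply Rle_ge, Rmult_le_pos; auto).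
  assert (Ec : c = (u * eps)%R) by (unfold u; field; lra).
  assert (0 <= (INR l - u) * (eps * INR l))%R by (apply Rmult_le_pos; nra).
  rewrite Ec; simpl; nra.
Qed.

Lemma quadratic_cost_estimate (a b l s : nat) (ar : R) : INR a = ar ->
  (Rabs (INR (s * (l * (a * l + b))) - INR s * (ar * INR l ^ 2)) <= INR s * (INR b * INR l))%R.
Proof.
  intros <-; rewrite !mult_INR, plus_INR, mult_INR.
  replace (INR s * (INR l * (INR a * INR l + INR b)) - INR s * (INR a * INR l ^ 2))%R
    with (INR s * (INR b * INR l))%R by ring.
  rewrite Rabs_right; [lra|].
  apply Rle_ge, Rmult_le_pos; [apply pos_INR|apply Rmult_le_pos; apply pos_INR].
Qed.

Theorem lemma9 :
  exists gO gE gT gP : nat -> R,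
    little_o_sq gO /\ little_o_sq gE /\ little_o_sq gT /\ little_o_sq gP /\
    forall l s : nat, (1 <= l)%nat -> (1 <= s)%nat ->
      (Rabs (INR (MTFO_cost (init_list l) (sigma_gamma l s)) - INR s * (3 * INR l ^ 2))
         <= INR s * gO l)%R /\
      (Rabs (INR (MTFE_cost (init_list l) (sigma_gamma l s)) - INR s * (3 * INR l ^ 2))
         <= INR s * gE l)%R /\
      (Rabs (INR (TS_cost (init_list l) (sigma_gamma l s)) - INR s * (4 * INR l ^ 2))
         <= INR s * gT l)%R /\
      (Rabs (INR (OPT (init_list l) (sigma_gamma l s)) - INR s * (2 * INR l ^ 2))
         <= INR s * gP l)%R.
Proof.
  exists (fun l => INR 3 * INR l)%R, (fun l => INR 3 * INR l)%R,
         (fun l => INR 2 * INR l)%R, (fun l => INR 4 * INR l)%R.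
  do 4 (split; [apply linear_little_o_sq, pos_INR|]).
  intros l s _ _; rewrite MTFO_value, MTFE_value, TS_value, OPT_value.
  split; [|split; [|split]]; apply quadratic_cost_estimate; simpl; ring.
Qed.
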